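(* Let $k\ge 1$, $d\in\mathbb{N}$ and $\alpha=(\alpha_1,\dots,\alpha_k)\in\mathbb{N}^k$ with $\alpha_1+\dots+\alpha_k=2d$. Then for every finite simple undirected graph, $$w_{\alpha_1}\cdots w_{\alpha_k}\le w_0^{k-1}\,w_{2d}.$$
   Context: $\mathbb{N}$ denotes the nonnegative integers. For $j\in\mathbb{N}$, $w_j$ denotes the total number of walks of length $j$ in the graph (a walk is a sequence of vertices in which consecutive vertices are adjacent; vertices and edges may repeat; the length is the number of edges); in particular $w_0$ is the number of vertices. *)

From mathcomp Require Import all_boot.
Set Implicit Arguments. Unset Strict Implicit. Unset Printing Implicit Defensive.

Definition simple_graph (T : finType) (e : rel T) : Prop :=
  symmetric e /\ irreflexive e.

Definition walks (T : finType) (e : rel T) (j : nat) : {set (j.+1).-tuple T} :=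
  [set t : (j.+1).-tuple T | path e (thead t) (behead t)].

Definition w (T : finType) (e : rel T) (j : nat) : nat := #|walks e j|.

From mathcomp Require Import all_boot.
From mathcomp Require Import zify.
Set Implicit Arguments. Unset Strict Implicit. Unset Printing Implicit Defensive.

(* Let A be the adjacency matrix and 1 the all-ones vector, so that
   w_j = <A^j 1, 1>.  As A is symmetric, w_(a+b) = <A^a 1, A^b 1>, and
   Cauchy-Schwarz gives w_(a+b)^2 <= w_(2a) w_(2b).  Hence m |-> w_(2m) is
   log-convex, which interpolates to w_(2m)^d <= w_0^(d-m) w_(2d)^m for m <= d.
   Writing a = floor(a/2) + ceil(a/2) and combining both facts gives
   w_a^(2d) <= w_0^(2d-a) w_(2d)^a for every a <= 2d; multiplying these bounds
   over the alpha_i and taking 2d-th roots proves the theorem. *)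

Lemma leq_expn2r e m n : m <= n -> m ^ e <= n ^ e.
Proof. by move=> le_mn; elim: e => // e IHe; rewrite !expnS leq_mul. Qed.

Lemma prodn_expn (I : Type) (r : seq I) (P : pred I) (F : I -> nat) e :
  \prod_(i <- r | P i) F i ^ e = (\prod_(i <- r | P i) F i) ^ e.
Proof.
by rewrite [RHS](big_morph (expn^~ e) (fun x y => expnMn x y e) (exp1n e)).
Qed.

Lemma Cauchy_Schwarz_nat (T : finType) (f g : T -> nat) :
  (\sum_v f v * g v) ^ 2 <= (\sum_v f v ^ 2) * (\sum_v g v ^ 2).
Proof.
pose p u v := f u * g v.
have sqr_sum : (\sum_v f v * g v) ^ 2 = \sum_u \sum_v p u v * p v u.
  rewrite -mulnn big_distrl; apply: eq_bigr => u _; rewrite big_distrr.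
  by apply: eq_bigr => v _ /=; rewrite /p mulnACA [RHS]mulnACA [g v * g u]mulnC.
have prod_sum : (\sum_v f v ^ 2) * (\sum_v g v ^ 2) = \sum_u \sum_v p u v ^ 2.
  rewrite big_distrl; apply: eq_bigr => u _; rewrite big_distrr.
  by apply: eq_bigr => v _; rewrite expnMn.
rewrite -(leq_pmul2l (isT : 0 < 2)) sqr_sum prod_sum [X in _ <= X]mul2n -addnn.
rewrite [X in _ <= _ + X]exchange_big -big_split big_distrr /=.
apply: leq_sum => u _; rewrite -big_split big_distrr /=.
by apply: leq_sum => v _; apply: (nat_Cauchy _ _).1.
Qed.

Lemma big_tupleS (R : Type) (idx : R) (op : Monoid.com_law idx) (T : finType) n
    (F : n.+1.-tuple T -> R) :
  \big[op/idx]_(t : n.+1.-tuple T) F t =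
  \big[op/idx]_(x : T) \big[op/idx]_(t : n.-tuple T) F [tuple of x :: t].
Proof.
rewrite pair_big (reindex (fun p : T * n.-tuple T => [tuple of p.1 :: p.2])) //=.
exists (fun t => (thead t, [tuple of behead t])) => [[x t] _ | t _].
  by congr pair; apply: val_inj.
by rewrite [in RHS](tuple_eta t).
Qed.

Section LogConvex.

Variable f : nat -> nat.
Hypothesis f_logconvex : forall n, f n.+1 ^ 2 <= f n * f n.+2.

Lemma logconvex_ratio_mono m n : m <= n -> f m.+1 * f n <= f m * f n.+1.
Proof.
elim: n => [|n IHn]; first by rewrite leqn0 => /eqP->; rewrite mulnC.
rewrite leq_eqVlt => /predU1P[-> | /IHn le_ratio]; first by rewrite mulnC.
have [-> | fn1_gt0] := posnP (f n.+1); first by rewrite muln0.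
rewrite -(leq_pmul2r fn1_gt0) -mulnA mulnn.
apply: leq_trans (_ : f m.+1 * (f n * f n.+2) <= _).
  by rewrite leq_mul2l f_logconvex orbT.
by rewrite mulnA [leqRHS]mulnAC leq_mul2r le_ratio orbT.
Qed.

Lemma logconvex_ratio_pow n j : j <= n.+1 -> f j * f n ^ j <= f 0 * f n.+1 ^ j.
Proof.
elim: j => [|j IHj] lt_jn; first by rewrite !expn0.
rewrite !expnS mulnA (mulnCA (f 0)).
apply: leq_trans (_ : f j * f n.+1 * f n ^ j <= _).
  by rewrite leq_mul2r logconvex_ratio_mono ?orbT.
by rewrite [leqLHS]mulnAC [leqLHS]mulnC leq_mul2l IHj 1?ltnW ?orbT.
Qed.

Lemma logconvex_interpolate n j : j <= n -> f j ^ n <= f 0 ^ (n - j) * f n ^ j.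
Proof.
elim: n => [|n IHn]; first by rewrite leqn0 => /eqP->.
rewrite leq_eqVlt => /predU1P[-> | lt_jn]; first by rewrite subnn mul1n.
rewrite subSn // expnS expnSr.
apply: leq_trans (_ : f j * (f 0 ^ (n - j) * f n ^ j) <= _).
  by rewrite leq_mul2l IHn ?orbT.
by rewrite mulnCA -mulnA leq_mul2l logconvex_ratio_pow ?orbT // ltnW.
Qed.

End LogConvex.


Section WalkCounts.

Variables (T : finType) (e : rel T).

Definition adjop (g : T -> nat) (v : T) : nat := \sum_u e v u * g u.

(* [nwalks_from j] is the vector A^j 1; its v-th entry counts the walks of
   length j starting at v. *)
Definition nwalks_from (j : nat) : T -> nat := iter j adjop (fun=> 1).

Lemma nwalks_fromS j v : nwalks_from j.+1 v = \sum_u e v u * nwalks_from j u.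
Proof. by []. Qed.

Lemma nwalks_fromE j v : nwalks_from j v = \sum_(s : j.-tuple T) path e v s.
Proof.
elim: j v => [|j IHj] v.
  by rewrite (eq_bigr (fun=> 1)) => [|s _]; rewrite ?tuple0 // sum1_card card_tuple.
rewrite nwalks_fromS big_tupleS; apply: eq_bigr => u _; rewrite IHj big_distrr.
by apply: eq_bigr => s _ /=; case: (e v u); rewrite ?mul1n ?mul0n.
Qed.

Lemma w_sum_nwalks_from j : w e j = \sum_v nwalks_from j v.
Proof.
rewrite /w /walks -sum1dep_card big_mkcond big_tupleS.
apply: eq_bigr => v _; rewrite nwalks_fromE.
by apply: eq_bigr => s _; rewrite theadE; case: path.
Qed.

Hypothesis e_sym : symmetric e.

Lemma sum_adjop_mul g h : \sum_v adjop g v * h v = \sum_v g v * adjop h v.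
Proof.
under eq_bigr do rewrite big_distrl.
under [RHS]eq_bigr do rewrite big_distrr.
rewrite exchange_big; apply: eq_bigr => u _; apply: eq_bigr => v _ /=.
by rewrite e_sym mulnCA mulnA.
Qed.

Lemma sum_iter_adjop_mul a g h :
  \sum_v iter a adjop g v * h v = \sum_v g v * iter a adjop h v.
Proof.
elim: a g h => [//|a IHa] g h.
by rewrite iterS sum_adjop_mul IHa; under eq_bigr do rewrite -iterSr.
Qed.

Lemma w_addn a b : w e (a + b) = \sum_v nwalks_from a v * nwalks_from b v.
Proof.
rewrite w_sum_nwalks_from.
transitivity (\sum_v iter a adjop (nwalks_from b) v * 1).
  by apply: eq_bigr => v _; rewrite muln1 /nwalks_from iterD.
by rewrite sum_iter_adjop_mul; apply: eq_bigr => v _; rewrite mulnC.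
Qed.

Lemma w_sqr_le a b : w e (a + b) ^ 2 <= w e (2 * a) * w e (2 * b).
Proof.
rewrite !mul2n -!addnn !w_addn; apply: leq_trans (Cauchy_Schwarz_nat _ _) _.
by apply: eq_leq; congr (_ * _); apply: eq_bigr => v _; rewrite mulnn.
Qed.

Lemma w_logconvex m : w e (2 * m.+1) ^ 2 <= w e (2 * m) * w e (2 * m.+2).
Proof. by have := w_sqr_le m m.+2; rewrite addnS -addSn addnn -mul2n; apply. Qed.

Lemma w_pow_le d a :
  a <= 2 * d -> w e a ^ (2 * d) <= w e 0 ^ (2 * d - a) * w e (2 * d) ^ a.
Proof.
move=> le_a.
have interp := @logconvex_interpolate (fun m => w e (2 * m)) w_logconvex d.
rewrite muln0 /= in interp.
set x := a./2; set y := uphalf a.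
have a_split : a = x + y by rewrite /y uphalf_half addnCA addnn odd_double_half.
have le_yd : y <= d by rewrite leq_uphalf_double -mul2n.
have le_xd : x <= d by apply: leq_trans le_yd; rewrite /y uphalf_half leq_addl.
have -> : 2 * d - a = (d - x) + (d - y) by lia.
rewrite {1}a_split expnM.
apply: leq_trans (leq_expn2r d (w_sqr_le x y)) _.
rewrite expnMn; apply: leq_trans (leq_mul (interp x le_xd) (interp y le_yd)) _.
by rewrite mulnACA -!expnD -a_split.
Qed.

End WalkCounts.

Theorem theorem1 (k d : nat) (alpha : 'I_k -> nat) (T : finType) (e : rel T) :
  1 <= k ->
  \sum_(i < k) alpha i = 2 * d ->
  simple_graph e ->
  \prod_(i < k) w e (alpha i) <= (w e 0) ^ (k - 1) * w e (2 * d).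
Proof.
move=> k_gt0 sum_alpha [e_sym _].
have alpha_le i : alpha i <= 2 * d by rewrite -sum_alpha (bigD1 i) //= leq_addr.
have [d0 | d_gt0] := posnP d.
  have alpha0 i : alpha i = 0.
    by apply/eqP; have := alpha_le i; rewrite d0 muln0 leqn0.
  under eq_bigr do rewrite alpha0.
  by rewrite d0 prod_nat_const card_ord -expnSr subn1 prednK.
rewrite -(@leq_exp2r _ _ (2 * d)) ?muln_gt0 // -prodn_expn.
apply: leq_trans (leq_prod (fun i _ => w_pow_le e_sym (alpha_le i))) _.
have sum_co : \sum_(i < k) (2 * d - alpha i) = (k - 1) * (2 * d).
  by rewrite sumnB // sum_nat_const card_ord sum_alpha mulnBl mul1n.
by rewrite big_split /= -!expn_sum sum_alpha sum_co expnMn expnM.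
Qed.
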